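(* If $K$ is a compact convex subset of $\mathbb{R}^n$ of dimension $n$, then there exist regular unit normal vectors $u_0, \ldots, u_n$ of $K$, at distinct exposed points $x_0, \ldots, x_n$ of $K$ (with $x_i = K^{u_i}$), such that $u_0, \ldots, u_n$ are the outward unit normal vectors of the facets of some $n$-dimensional simplex in $\mathbb{R}^n$.
   Context: For a unit vector $u$, $K^u=\{x\in K : x\cdot u = h_K(u)\}$ where $h_K(u)=\max_{x\in K}x\cdot u$. A point $x$ is an exposed point of $K$ if $\{x\} = K^u$ for some unit vector $u$; such a direction $u$ is called a regular unit normal to $K$ (at $x$). *)

From HB Require Import structures.
From mathcomp Require Import all_boot all_order all_algebra.
From mathcomp Require Import all_classical all_reals all_analysis.
Set Implicit Arguments. Unset Strict Implicit. Unset Printing Implicit Defensive.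
Import Order.TTheory GRing.Theory Num.Theory.
Import numFieldNormedType.Exports.
Local Open Scope classical_set_scope.
Local Open Scope ring_scope.

Section Defs.
Variables (R : realType) (n : nat).
Notation vec := 'rV[R]_n.

Definition dot (x y : vec) : R := \sum_(i < n) x 0 i * y 0 i.

Definition unit_vec (u : vec) : Prop := dot u u = 1.

Definition affine_hull (K : set vec) : set vec :=
  [set z | exists (m : nat) (p : 'I_m -> vec) (w : 'I_m -> R),
     (forall i, K (p i)) /\ \sum_(i < m) w i = 1 /\ z = \sum_(i < m) w i *: p i].

Definition full_dim (K : set vec) : Prop := affine_hull K = setT.

(* K^u = { x in K : x . u = h_K(u) }, h_K(u) = max_{y in K} y . u *)
Definition support_set (K : set vec) (u : vec) : set vec :=
  [set x | K x /\ forall y, K y -> dot y u <= dot x u].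

Definition regular_normal_at (K : set vec) (u x : vec) : Prop :=
  unit_vec u /\ support_set K u = [set x].

Definition exposed_point (K : set vec) (x : vec) : Prop :=
  exists u, regular_normal_at K u x.

Definition aff_indep (v : 'I_n.+1 -> vec) : Prop :=
  forall c : 'I_n.+1 -> R, \sum_(j < n.+1) c j = 0 ->
    \sum_(j < n.+1) c j *: v j = 0 -> forall j, c j = 0.

(* u i is the outward unit normal of the facet conv{v j : j != i} of the
   n-simplex with (affinely independent) vertices v *)
Definition outward_facet_normals (v u : 'I_n.+1 -> vec) : Prop :=
  aff_indep v /\
  forall i, unit_vec (u i) /\
    (forall j k, j != i -> k != i -> dot (v j) (u i) = dot (v k) (u i)) /\
    (forall j, j != i -> dot (v i) (u i) < dot (v j) (u i)).

Definition simplex_facet_normals (u : 'I_n.+1 -> vec) : Prop :=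
  exists v : 'I_n.+1 -> vec, outward_facet_normals v u.

End Defs.

From mathcomp Require Import all_boot all_order all_algebra.
From mathcomp Require Import all_classical all_reals all_analysis.
From mathcomp Require Import ring lra perm.
Import Order.TTheory GRing.Theory Num.Theory.
Import numFieldNormedType.Exports.
Local Open Scope classical_set_scope.
Local Open Scope ring_scope.
Set Implicit Arguments. Unset Strict Implicit. Unset Printing Implicit Defensive.

(* Among all (n+1)-tuples p of points of K maximize
     det [1 p_i] + eps * 1/2 * sum_i |p_i - centroid p|^2,
   with eps so small that the maximizer spans a nondegenerate simplex.  The
   determinant is affine in each vertex p_i, with gradient a row a_i of cofactors
   (and sum_i a_i = 0), while the second term is strictly convex in p_i.  Hence
   maximality in the i-th slot says that g_i = a_i + eps (p_i - centroid p)
   exposes p_i, K falling away quadratically from the supporting hyperplane.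
   The g_i sum to zero and, because the simplex is nondegenerate, span R^n;
   normalized, such vectors are the outward facet normals of a simplex. *)

Section Dot.
Variables (R : realType) (n : nat).
Implicit Types (x y z : 'rV[R]_n) (a : R).

Lemma dotC x y : dot x y = dot y x.
Proof. by apply: eq_bigr => i _; rewrite mulrC. Qed.

Lemma dotDl x y z : dot (x + y) z = dot x z + dot y z.
Proof. by rewrite /dot -big_split; apply: eq_bigr => i _; rewrite mxE mulrDl. Qed.

Lemma dotDr x y z : dot z (x + y) = dot z x + dot z y.
Proof. by rewrite dotC dotDl !(dotC z). Qed.

Lemma dotZl a x y : dot (a *: x) y = a * dot x y.
Proof. by rewrite /dot mulr_sumr; apply: eq_bigr => i _; rewrite mxE mulrA. Qed.

Lemma dotZr a x y : dot y (a *: x) = a * dot y x.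
Proof. by rewrite dotC dotZl dotC. Qed.

Lemma dotNl x y : dot (- x) y = - dot x y.
Proof. by rewrite -scaleN1r dotZl mulN1r. Qed.

Lemma dotNr x y : dot y (- x) = - dot y x.
Proof. by rewrite dotC dotNl dotC. Qed.

Lemma dotBl x y z : dot (x - y) z = dot x z - dot y z.
Proof. by rewrite dotDl dotNl. Qed.

Lemma dotBr x y z : dot z (x - y) = dot z x - dot z y.
Proof. by rewrite dotDr dotNr. Qed.

Lemma dot0l x : dot 0 x = 0.
Proof. by rewrite /dot big1 // => i _; rewrite mxE mul0r. Qed.

Lemma dot0r x : dot x 0 = 0.
Proof. by rewrite dotC dot0l. Qed.

Lemma dot_suml I (r : seq I) (P : pred I) (F : I -> 'rV[R]_n) y :
  dot (\sum_(i <- r | P i) F i) y = \sum_(i <- r | P i) dot (F i) y.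
Proof. by elim/big_rec2: _ => [|i a x _ <-]; rewrite ?dot0l ?dotDl. Qed.

Lemma dot_sumr I (r : seq I) (P : pred I) (F : I -> 'rV[R]_n) y :
  dot y (\sum_(i <- r | P i) F i) = \sum_(i <- r | P i) dot y (F i).
Proof. by rewrite dotC dot_suml; apply: eq_bigr => i _; rewrite dotC. Qed.

Lemma dot_ge0 x : 0 <= dot x x.
Proof. by apply: sumr_ge0 => i _; rewrite -expr2 sqr_ge0. Qed.

Lemma dot_eq0 x : (dot x x == 0) = (x == 0).
Proof.
apply/idP/eqP => [|->]; last by rewrite dot0l.
rewrite psumr_eq0 => [/allP x0|i _]; last by rewrite -expr2 sqr_ge0.
apply/rowP => i; rewrite mxE; apply/eqP.
by rewrite -sqrf_eq0 expr2; exact: x0 (mem_index_enum i).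
Qed.

Definition normalize x := (Num.sqrt (dot x x))^-1 *: x.

Lemma normalize_unit x : x != 0 -> unit_vec (normalize x).
Proof.
rewrite -dot_eq0 => x0.
rewrite /unit_vec /normalize dotZl dotZr mulrA -invfM -expr2 sqr_sqrtr ?dot_ge0 //.
by rewrite mulVf.
Qed.

Lemma dot_normalize x y : dot y (normalize x) = (Num.sqrt (dot x x))^-1 * dot y x.
Proof. exact: dotZr. Qed.

Lemma normalize_scale_gt0 x : x != 0 -> 0 < (Num.sqrt (dot x x))^-1.
Proof. by rewrite -dot_eq0 invr_gt0 sqrtr_gt0 lt_def dot_ge0 andbT. Qed.

Lemma ler_dot_normalize x y z : x != 0 ->
  (dot y (normalize x) <= dot z (normalize x)) = (dot y x <= dot z x).
Proof. by move=> /normalize_scale_gt0 s_gt0; rewrite !dot_normalize ler_pM2l. Qed.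

Lemma ltr_dot_normalize x y z : x != 0 ->
  (dot y (normalize x) < dot z (normalize x)) = (dot y x < dot z x).
Proof. by move=> /normalize_scale_gt0 s_gt0; rewrite !dot_normalize ltr_pM2l. Qed.

End Dot.

Section SimplexMatrix.
Variables (R : realType) (n : nat).
Local Notation vec := 'rV[R]_n.
Local Notation N := n.+1.
Implicit Types (p : 'I_N -> vec) (y z : vec).

(* Homogeneous coordinates (1, y) of a point and (0, z) of a direction. *)
Definition homog y : 'rV[R]_N := \row_j oapp (y 0) 1 (unlift ord0 j).
Definition homog_dir z : 'rV[R]_N := \row_j oapp (z 0) 0 (unlift ord0 j).

(* Its determinant is n! times the signed volume of the simplex with vertices p. *)
Definition simplex_mx p : 'M[R]_N := \matrix_i homog (p i).

Definition det_grad p i : vec := \row_k cofactor (simplex_mx p) i (lift ord0 k).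

Lemma homog_affine m (q : 'I_m -> vec) (w : 'I_m -> R) :
  \sum_i w i = 1 -> homog (\sum_i w i *: q i) = \sum_i w i *: homog (q i).
Proof.
move=> w1; apply/rowP => j; rewrite summxE !mxE.
case E: (unlift ord0 j) => [k|] /=.
  by rewrite summxE; apply: eq_bigr => i _; rewrite !mxE E.
by rewrite -w1; apply: eq_bigr => i _; rewrite !mxE E mulr1.
Qed.

Lemma homog_cofactor y (A : 'M[R]_N) i :
  \sum_k homog y 0 k * cofactor A i k =
  cofactor A i ord0 + dot y (\row_k cofactor A i (lift ord0 k)).
Proof.
rewrite big_ord_recl mxE unlift_none mul1r; congr (_ + _).
by apply: eq_bigr => k _; rewrite !mxE liftK.
Qed.

Lemma homog_dir_cofactor z (A : 'M[R]_N) i :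
  \sum_k homog_dir z 0 k * cofactor A i k = dot z (\row_k cofactor A i (lift ord0 k)).
Proof.
rewrite big_ord_recl mxE unlift_none mul0r add0r.
by apply: eq_bigr => k _; rewrite !mxE liftK.
Qed.

Lemma det_simplex_mx_set p i y :
  \det (simplex_mx [eta p with i |-> y]) =
  \det (simplex_mx p) + dot (y - p i) (det_grad p i).
Proof.
have cof_set k :
    cofactor (simplex_mx [eta p with i |-> y]) i k = cofactor (simplex_mx p) i k.
  rewrite /cofactor; congr (_ * \det _); apply/matrixP => a b.
  by rewrite !mxE /= eq_sym (negbTE (neq_lift i a)).
have row_i : \det (simplex_mx p) = \sum_k homog (p i) 0 k * cofactor (simplex_mx p) i k.
  by rewrite (expand_det_row _ i); apply: eq_bigr => k _; rewrite mxE.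
rewrite (expand_det_row _ i) row_i !homog_cofactor dotBl.
under eq_bigr => k _ do rewrite cof_set mxE /= eqxx.
by rewrite homog_cofactor addrACA subrr addr0.
Qed.

Lemma sum_det_grad p : \sum_i det_grad p i = 0.
Proof.
apply/rowP => k; rewrite summxE mxE.
have := congr1 (fun M : 'M[R]_N => M (lift ord0 k) ord0) (mul_adj_mx (simplex_mx p)).
rewrite !mxE eq_sym (negbTE (neq_lift _ _)) mulr0n => E; rewrite -[RHS]E.
by apply: eq_bigr => i _; rewrite !mxE unlift_none mulr1.
Qed.

Lemma simplex_mx_inj p : \det (simplex_mx p) != 0 -> injective p.
Proof.
move=> det_neq0 i j pij; apply/eqP; apply: contraNT det_neq0 => ij.
by apply/eqP/(determinant_alternate ij) => k; rewrite !mxE pij.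
Qed.

(* Cramer's rule for the system [c *m simplex_mx p = homog_dir z]. *)
Lemma dir_coords p z : \det (simplex_mx p) != 0 ->
  exists c : 'I_N -> R, [/\ \sum_i c i = 0, \sum_i c i *: p i = z &
    forall i, dot z (det_grad p i) = \det (simplex_mx p) * c i].
Proof.
move=> det_neq0; have A_unit : simplex_mx p \in unitmx by rewrite unitmxE unitfE.
pose c := homog_dir z *m invmx (simplex_mx p).
have cA : c *m simplex_mx p = homog_dir z by rewrite mulmxKV.
exists (c 0); split.
- have := congr1 (fun r : 'rV[R]_N => r 0 ord0) cA.
  rewrite !mxE unlift_none => E; rewrite -[RHS]E.
  by apply: eq_bigr => i _; rewrite !mxE unlift_none mulr1.
- apply/rowP => k; rewrite summxE.
  have := congr1 (fun r : 'rV[R]_N => r 0 (lift ord0 k)) cA.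
  rewrite !mxE liftK /= => <-.
  by apply: eq_bigr => i _; rewrite !mxE liftK.
- move=> i; rewrite /det_grad -homog_dir_cofactor.
  transitivity ((homog_dir z *m \adj (simplex_mx p)) 0 i).
    by rewrite mxE; apply: eq_bigr => k _; rewrite [\adj _ _ _]mxE.
  by rewrite -cA -mulmxA mul_mx_adj mul_mx_scalar mxE.
Qed.

End SimplexMatrix.

Section SimplexOfNormals.
Variables (R : realType) (n : nat).
Local Notation vec := 'rV[R]_n.
Local Notation N := n.+1.
Lemma sum_mul_delta (c : 'I_N -> R) j : \sum_i c i * (i == j)%:R = c j.
Proof.
by rewrite (bigD1 j) //= eqxx mulr1 big1 ?addr0 // => i /negbTE ->; rewrite mulr0.
Qed.

Variable g : 'I_N -> vec.
Hypotheses (sum_g : \sum_i g i = 0)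
  (g_span : forall z, (forall i, dot z (g i) = 0) -> z = 0).

(* [v |-> (dot v (g i))_i] is injective, so it maps R^n onto the sum-zero
   hyperplane of R^N. *)
Lemma solve_dual_system (t : 'rV[R]_N) :
  \sum_i t 0 i = 0 -> exists v : vec, forall i, dot v (g i) = t 0 i.
Proof.
move=> sum_t; pose G : 'M[R]_(n, N) := \matrix_(k, i) g i 0 k.
have mulG v i : (v *m G) 0 i = dot v (g i).
  by rewrite mxE; apply: eq_bigr => k _; rewrite mxE.
pose L : 'M[R]_(N, 1) := const_mx 1.
have kerL (r : 'rV[R]_N) : (r <= kermx L)%MS = (\sum_i r 0 i == 0).
  apply/sub_kermxP/eqP => [/rowP/(_ 0)|sum_r].
    rewrite !mxE => E; rewrite -[RHS]E.
    by apply: eq_bigr => i _; rewrite mxE mulr1.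
  apply/rowP => j; rewrite !mxE -[RHS]sum_r.
  by apply: eq_bigr => i _; rewrite mxE mulr1.
have G_free : row_free G.
  by apply: inj_row_free => v /rowP vG; apply: g_span => i; rewrite -mulG vG mxE.
have GL : (G <= kermx L)%MS.
  apply/row_subP => k; rewrite kerL.
  have /rowP/(_ k) := sum_g; rewrite summxE mxE => sum_k.
  by rewrite -[X in _ == X]sum_k; apply/eqP/eq_bigr => i _; rewrite !mxE.
have rkL : \rank L = 1%N.
  apply/eqP; rewrite eqn_leq rank_leq_col lt0n mxrank_eq0.
  by apply/eqP => /matrixP/(_ ord0 ord0); rewrite !mxE => /eqP; rewrite oner_eq0.
have LG : (kermx L <= G)%MS.
  by rewrite -(mxrank_leqif_sup GL).2 mxrank_ker rkL subn1; move: G_free => /eqP ->.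
have tG : (t <= G)%MS by apply: submx_trans LG; rewrite kerL sum_t.
by exists (t *m pinvmx G) => i; rewrite -mulG mulmxKpV.
Qed.

Hypothesis g_neq0 : forall i, g i != 0.

Lemma simplex_of_balanced_normals : simplex_facet_normals (fun i => normalize (g i)).
Proof.
have /choice[v vg] : forall j, exists v : vec,
    forall i, dot v (g i) = 1 - N%:R * (i == j)%:R.
  move=> j; have [|v vt] := solve_dual_system (t := \row_i (1 - N%:R * (i == j)%:R)).
    under eq_bigr do rewrite mxE.
    by rewrite sumrB sum_mul_delta sumr_const card_ord subrr.
  by exists v => i; rewrite vt mxE.
have N_gt0 : (0 : R) < N%:R by rewrite ltr0n.
exists v; split.
  move=> c sum_c sum_cv j.
  have := congr1 (fun x => dot x (g j)) sum_cv; rewrite dot_suml dot0l.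
  under eq_bigr => i _ do rewrite dotZl vg mulrBr mulr1 mulrCA eq_sym.
  rewrite sumrB sum_c -mulr_sumr sum_mul_delta sub0r => /eqP.
  by rewrite oppr_eq0 mulf_eq0 (gt_eqF N_gt0) => /eqP.
move=> i; split; first exact: normalize_unit.
split=> [j k ji ki | j ji].
  by rewrite !dot_normalize !vg !(eq_sym i) (negbTE ji) (negbTE ki).
rewrite ltr_dot_normalize // !vg eqxx eq_sym (negbTE ji) mulr1 mulr0 subr0.
by rewrite ltrBlDr ltrDl.
Qed.

End SimplexOfNormals.

Lemma sum_eta_set (V : zmodType) (I : finType) T (p : I -> T) i y (F : T -> V) :
  \sum_j F ([eta p with i |-> y] j) = \sum_j F (p j) + (F y - F (p i)).
Proof.
rewrite (bigD1 i) //= [in RHS](bigD1 i) //= eqxx.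
under eq_bigr => j /negbTE -> do [].
by rewrite [RHS]addrC addrA subrK.
Qed.

Lemma row_sub_of_relation (F : fieldType) m k (A B : 'M[F]_(m, k)) (v : 'rV[F]_m) i :
  v *m A = 0 -> v 0 i != 0 -> (forall j, j != i -> (row j A <= B)%MS) -> (A <= B)%MS.
Proof.
move=> vA vi rowsB; apply/row_subP => j; have [->|] := eqVneq j i; last exact: rowsB.
have : \sum_l v 0 l *: row l A = 0 by rewrite -mulmx_sum_row.
rewrite (bigD1 i) //= => /eqP; rewrite addr_eq0 => /eqP vi_row.
rewrite -[row i A]scale1r -(mulVf vi) -scalerA vi_row.
apply: scalemx_sub; rewrite eqmx_opp.
by apply: summx_sub => l li; apply/scalemx_sub/rowsB.
Qed.

Section FullDimension.
Variables (R : realType) (n : nat) (K : set 'rV[R]_n).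
Local Notation vec := 'rV[R]_n.
Local Notation N := n.+1.
Hypothesis K_full : full_dim K.

Lemma full_dim_nonempty : exists x, K x.
Proof.
have [[|m] [p [w [pK [w1 _]]]]] : affine_hull K 0 by rewrite K_full.
  by move: w1; rewrite big_ord0 => /eqP; rewrite eq_sym oner_eq0.
by exists (p ord0).
Qed.

Lemma full_dim_nonsingleton x : (0 < n)%N -> exists2 y, K y & y != x.
Proof.
move=> n_gt0; pose e : vec := const_mx 1.
have [m [p [w [pK [w1 xe]]]]] : affine_hull K (x + e) by rewrite K_full.
have [j pjx|all_x] := pickP (fun j => p j != x); first by exists (p j).
have : x + e = x.
  rewrite xe; under eq_bigr => j _ do rewrite (eqP (negbFE (all_x j))).
  by rewrite -scaler_suml w1 scale1r.
move/(congr1 (fun v : vec => v 0 (Ordinal n_gt0))); rewrite !mxE => /eqP.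
by rewrite -subr_eq0 addrAC subrr add0r oner_eq0.
Qed.

Lemma full_dim_homog_span (M : 'M[R]_N) :
  (forall y, K y -> (homog y <= M)%MS) -> row_full M.
Proof.
move=> homogK_M.
have homog_M z : (homog z <= M)%MS.
  have [m [p [w [pK [w1 ->]]]]] : affine_hull K z by rewrite K_full.
  by rewrite homog_affine //; apply: summx_sub => i _; apply/scalemx_sub/homogK_M.
rewrite -sub1mx; apply/row_subP => j; rewrite row1.
case: (unliftP ord0 j) => [k ->|->].
  have -> : delta_mx 0 (lift ord0 k) = homog (delta_mx 0 k) - homog 0 :> 'rV[R]_N.
    apply/rowP => l; rewrite !mxE; case: (unliftP ord0 l) => [k' ->|->].
      by rewrite /= !mxE (inj_eq lift_inj) subr0.
    by rewrite /= subrr.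
  by rewrite addmx_sub ?eqmx_opp.
have -> : delta_mx 0 ord0 = homog 0 :> 'rV[R]_N.
  apply/rowP => l; rewrite !mxE; case: (unliftP ord0 l) => [k ->|->].
    by rewrite /= mxE.
  by [].
exact: homog_M.
Qed.

Lemma simplex_rank_step (q : 'I_N -> vec) : (forall i, K (q i)) ->
  (\rank (simplex_mx q) < N)%N ->
  exists2 q', forall i, K (q' i) & (\rank (simplex_mx q) < \rank (simplex_mx q'))%N.
Proof.
move=> qK rk_lt; have A_nfull : ~~ row_full (simplex_mx q) by rewrite /row_full ltn_eqF.
have [y Ky y_out] : exists2 y, K y & ~~ (homog y <= simplex_mx q)%MS.
  apply: contrapT => no_y; move/negP: A_nfull; apply; apply: full_dim_homog_span => y Ky.
  by apply/negPn/negP => y_out; apply: no_y; exists y.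
have /rowV0Pn[v /sub_kermxP vA v_neq0] : kermx (simplex_mx q) != 0.
  by rewrite kermx_eq0 /row_free ltn_eqF.
have [i vi] : exists i, v 0 i != 0.
  apply/existsP; apply: contraNT v_neq0 => /existsPn v0.
  by apply/eqP/rowP => i; rewrite mxE; apply/eqP/negbNE/v0.
pose q' := [eta q with i |-> y].
have rows_q' j : j != i -> (row j (simplex_mx q) <= simplex_mx q')%MS.
  move=> ji; suff -> : row j (simplex_mx q) = row j (simplex_mx q') by exact: row_sub.
  by rewrite !rowK /= (negbTE ji).
have y_q' : (homog y <= simplex_mx q')%MS.
  suff <- : row i (simplex_mx q') = homog y by exact: row_sub.
  by rewrite rowK /= eqxx.
exists q' => [j|]; first by rewrite /=; case: eqP.
apply: (@leq_trans (\rank (simplex_mx q + homog y)%MS)).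
  apply: rank_ltmx; rewrite ltmxE addsmxSl /=; apply: contra y_out.
  exact: submx_trans (addsmxSr _ _).
by apply: mxrankS; rewrite addsmx_sub y_q' (row_sub_of_relation vA vi rows_q').
Qed.

Lemma full_dim_simplex_unit :
  exists2 q : 'I_N -> vec, forall i, K (q i) & simplex_mx q \in unitmx.
Proof.
have [x0 Kx0] := full_dim_nonempty.
suff /(_ N (leqnn N))[q qK rk] : forall k, (k <= N)%N ->
    exists2 q : 'I_N -> vec, forall i, K (q i) & (k <= \rank (simplex_mx q))%N.
  by exists q; rewrite // -row_free_unit /row_free eqn_leq rank_leq_row.
elim=> [|k IHk] k_le; first by exists (fun _ => x0).
have [q qK rk] := IHk (ltnW k_le).
have [k_lt|rk_le] := ltnP k (\rank (simplex_mx q)); first by exists q.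
have [q' q'K rk'] := simplex_rank_step qK (leq_ltn_trans rk_le k_le).
by exists q'; last exact: leq_ltn_trans rk'.
Qed.

Lemma full_dim_simplex_det_gt0 : (0 < n)%N ->
  exists2 q : 'I_N -> vec, forall i, K (q i) & 0 < \det (simplex_mx q).
Proof.
move=> n_gt0; have [q qK] := full_dim_simplex_unit.
rewrite unitmxE unitfE => det_neq0.
have [det_gt0|det_lt0|det0] := ltgtP 0 (\det (simplex_mx q)); first by exists q.
  pose s := tperm (ord0 : 'I_N) ord_max.
  exists (q \o s) => [i|]; first exact: qK.
  have -> : simplex_mx (q \o s) = perm_mx s *m simplex_mx q.
    by rewrite -row_permE; apply/matrixP => i j; rewrite !mxE.
  have s_odd : ord0 != ord_max :> 'I_N by rewrite -val_eqE /= eq_sym -lt0n.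
  by rewrite det_mulmx det_perm odd_tperm s_odd expr1 mulN1r oppr_gt0.
by rewrite -det0 eqxx in det_neq0.
Qed.
End FullDimension.

Section RealContinuity.
Variables (R : realType) (T : topologicalType).

Lemma continuous_sum I (r : seq I) (P : pred I) (F : I -> T -> R) :
  (forall i, continuous (F i)) -> continuous (fun x => \sum_(i <- r | P i) F i x).
Proof. by move=> F_cont; apply: continuous_big => [|i _]; [exact: add_continuous|]. Qed.

Lemma continuous_prod I (r : seq I) (P : pred I) (F : I -> T -> R) :
  (forall i, continuous (F i)) -> continuous (fun x => \prod_(i <- r | P i) F i x).
Proof. by move=> F_cont; apply: continuous_big => [|i _]; [exact: mul_continuous|]. Qed.

Lemma continuous_mulr (f g : T -> R) :
  continuous f -> continuous g -> continuous (fun x => f x * g x).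
Proof. by move=> f_cont g_cont x; apply: cvgM; [exact: f_cont | exact: g_cont]. Qed.

Lemma continuous_addr (f g : T -> R) :
  continuous f -> continuous g -> continuous (fun x => f x + g x).
Proof. by move=> f_cont g_cont x; apply: cvgD; [exact: f_cont | exact: g_cont]. Qed.

Lemma continuous_subr (f g : T -> R) :
  continuous f -> continuous g -> continuous (fun x => f x - g x).
Proof. by move=> f_cont g_cont x; apply: cvgB; [exact: f_cont | exact: g_cont]. Qed.

Lemma continuous_dot n (f g : T -> 'rV[R]_n) :
  (forall k, continuous (fun x => f x 0 k)) ->
  (forall k, continuous (fun x => g x 0 k)) ->
  continuous (fun x => dot (f x) (g x)).
Proof.
by move=> f_cont g_cont; rewrite /dot; apply: continuous_sum => k; apply: continuous_mulr.
Qed.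

End RealContinuity.

Section Configurations.
Variables (R : realType) (n : nat).
Local Notation vec := 'rV[R]_n.
Local Notation N := n.+1.
Local Notation config := {ptws 'I_N -> vec}.

Lemma continuous_coord i k : continuous (fun q : config => q i 0 k).
Proof.
move=> q; apply: (@continuous_comp _ _ _ (fun q : config => q i) (fun x : vec => x 0 k)).
  exact: proj_continuous.
exact: coord_continuous.
Qed.

Lemma continuous_det_simplex_mx : continuous (fun q : config => \det (simplex_mx q)).
Proof.
have entry_cont i j : continuous (fun q : config => simplex_mx q i j).
  case E: (unlift ord0 j) => [k|].
    suff -> : (fun q : config => simplex_mx q i j) = (fun q => q i 0 k).
      exact: continuous_coord.
    by apply/funext => q; rewrite !mxE E.
  suff -> : (fun q : config => simplex_mx q i j) = (fun => 1) by exact: cst_continuous.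
  by apply/funext => q; rewrite !mxE E.
rewrite /determinant; apply: continuous_sum => s.
apply: continuous_mulr; first exact: cst_continuous.
exact: continuous_prod (fun i => entry_cont i (s i)).
Qed.

(* Half the sum of the squared distances from the [p j] to their centroid. *)
Definition spread (p : 'I_N -> vec) : R :=
  (\sum_j dot (p j) (p j)) / 2 - dot (\sum_j p j) (\sum_j p j) / (2 * N%:R).

Definition centroid (p : 'I_N -> vec) : vec := N%:R^-1 *: \sum_j p j.

Lemma continuous_spread : continuous (fun q : config => spread q).
Proof.
have sum_cont k : continuous (fun q : config => (\sum_j q j) 0 k).
  suff -> : (fun q : config => (\sum_j q j) 0 k) = (fun q => \sum_j q j 0 k).
    by apply: continuous_sum => j; exact: continuous_coord.
  by apply/funext => q; rewrite summxE.
have sq_cont : continuous (fun q : config => \sum_j dot (q j) (q j)).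
  by apply: continuous_sum => j; apply: continuous_dot => k; exact: continuous_coord.
have sum_sq_cont : continuous (fun q : config => dot (\sum_j q j) (\sum_j q j)).
  exact: continuous_dot.
by apply: continuous_subr; apply: continuous_mulr => //; exact: cst_continuous.
Qed.

Lemma config_argmax (K : set vec) (f : config -> R) :
  continuous f -> compact K -> K !=set0 ->
  exists2 p : config, (forall i, K (p i)) &
    forall q : config, (forall i, K (q i)) -> f q <= f p.
Proof.
move=> f_cont K_compact [x0 Kx0].
have KN_compact : compact [set q : config | forall i, K (q i)].
  exact: (@tychonoff 'I_N (fun _ => vec) (fun _ => K)).
have [|p KNp p_max] := compact_EVT_max _ KN_compact (continuous_subspaceT f_cont).
  by exists (fun _ => x0).
by exists p => [|q Kq]; [move: KNp; rewrite inE | apply: p_max; rewrite inE].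
Qed.

Lemma config_argmin (K : set vec) (f : config -> R) :
  continuous f -> compact K -> K !=set0 ->
  exists2 p : config, (forall i, K (p i)) &
    forall q : config, (forall i, K (q i)) -> f p <= f q.
Proof.
move=> f_cont K_compact K_ne.
have [|p Kp p_max] := config_argmax (f := fun q => 0 - f q) _ K_compact K_ne.
  by apply: continuous_subr => //; exact: cst_continuous.
by exists p => // q Kq; have := p_max q Kq; rewrite !sub0r lerN2.
Qed.

Lemma spread_set p i y :
  spread [eta p with i |-> y] - spread p =
  dot (y - p i) (p i - centroid p) + n%:R / (2 * N%:R) * dot (y - p i) (y - p i).
Proof.
rewrite /spread (sum_eta_set p i y (fun x => dot x x)) (sum_eta_set p i y (fun x => x)).
have -> : y = p i + (y - p i) by rewrite addrC subrK.
rewrite [p i + _]addrC addrK; move: (y - p i) => d.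
rewrite /centroid; set S := \sum_j p j.
rewrite !(dotDl, dotDr, dotBr, dotNr, dotZr) !(dotC S d) !(dotC (p i) d).
have -> : N%:R = n%:R + 1 :> R by rewrite natr1.
by field; rewrite natr1 pnatr_eq0.
Qed.
End Configurations.

Section SharpNormals.
Variables (R : realType) (n : nat) (K : set 'rV[R]_n).
Local Notation vec := 'rV[R]_n.

Definition sharp_normal (g x : vec) : Prop :=
  exists2 mu : R, 0 < mu & forall y, K y -> dot (y - x) g <= - (mu * dot (y - x) (y - x)).

Variables (g x : vec).
Hypothesis g_sharp : sharp_normal g x.

Lemma sharp_normal_le0 y : K y -> dot (y - x) g <= 0.
Proof.
move=> Ky; have [mu mu_gt0 /(_ y Ky) g_le] := g_sharp.
by apply: le_trans g_le _; rewrite oppr_le0 mulr_ge0 ?dot_ge0 ?ltW.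
Qed.

Lemma sharp_normal_eq y : K y -> 0 <= dot (y - x) g -> y = x.
Proof.
move=> Ky g_ge0; have [mu mu_gt0 /(_ y Ky) g_le] := g_sharp.
have d_le0 : dot (y - x) (y - x) <= 0 by rewrite -(pmulr_rle0 _ mu_gt0); lra.
by apply/eqP; rewrite -subr_eq0 -dot_eq0 eq_le d_le0 dot_ge0.
Qed.

Lemma sharp_normal_neq0 y : K y -> y != x -> g != 0.
Proof.
move=> Ky; apply: contra_neq => g0.
by apply: sharp_normal_eq Ky _; rewrite g0 dot0r.
Qed.

Lemma sharp_normal_regular : K x -> g != 0 -> regular_normal_at K (normalize g) x.
Proof.
move=> Kx g_neq0; split; first exact: normalize_unit.
apply/seteqP; split=> [y [Ky y_max] | y ->] /=.
  apply: sharp_normal_eq Ky _.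
  by rewrite dotBl subr_ge0 -(ler_dot_normalize _ _ g_neq0) y_max.
split=> // z Kz; rewrite ler_dot_normalize // -subr_le0 -dotBl.
exact: sharp_normal_le0.
Qed.
End SharpNormals.

Section Objective.
Variables (R : realType) (n : nat).
Local Notation vec := 'rV[R]_n.
Local Notation N := n.+1.
Variable eps : R.
Implicit Types (p : 'I_N -> vec).

Definition objective p : R := \det (simplex_mx p) + eps * spread p.

Definition objective_grad p i : vec := det_grad p i + eps *: (p i - centroid p).

Lemma objective_set p i y :
  objective [eta p with i |-> y] - objective p =
  dot (y - p i) (objective_grad p i) +
  eps * (n%:R / (2 * N%:R)) * dot (y - p i) (y - p i).
Proof.
rewrite /objective /objective_grad det_simplex_mx_set dotDr dotZr.
rewrite -[spread [eta p with i |-> y]](subrK (spread p)) spread_set.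
ring.
Qed.

Lemma continuous_objective :
  continuous (fun q : {ptws 'I_N -> vec} => objective q).
Proof.
apply: continuous_addr; first exact: continuous_det_simplex_mx.
by apply: continuous_mulr; [exact: cst_continuous | exact: continuous_spread].
Qed.

Lemma sum_objective_grad p : \sum_i objective_grad p i = 0.
Proof.
rewrite big_split /= sum_det_grad add0r -scaler_sumr sumrB sumr_const card_ord.
by rewrite /centroid -scaler_nat scalerA mulfV ?pnatr_eq0 // scale1r subrr scaler0.
Qed.

(* With [z = \sum_i c i *: p i] and [\sum_i c i = 0], pairing [z] against the
   gradients yields [det * \sum_i c i ^+ 2 + eps * dot z z = 0]. *)
Lemma objective_grad_span p : 0 < \det (simplex_mx p) -> 0 < eps ->
  forall z, (forall i, dot z (objective_grad p i) = 0) -> z = 0.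
Proof.
move=> det_gt0 eps_gt0 z z_perp.
have [c [sum_c sum_cp z_grad]] := dir_coords z (lt0r_neq0 det_gt0).
have zz : dot z z = \sum_i c i * dot z (p i).
  by rewrite -{2}sum_cp dot_sumr; apply: eq_bigr => i _; rewrite dotZr.
have : \sum_i c i * dot z (objective_grad p i) = 0.
  by rewrite big1 // => i _; rewrite z_perp mulr0.
under eq_bigr => i _ do rewrite dotDr z_grad dotZr dotBr mulrDr.
rewrite big_split /=.
under [X in X + _ = _]eq_bigr => i _ do rewrite mulrCA -expr2.
under [X in _ + X = _]eq_bigr => i _ do rewrite mulrCA mulrBr.
rewrite -!mulr_sumr sumrB -mulr_suml sum_c mul0r subr0 -zz => key.
have cc_ge0 : 0 <= \det (simplex_mx p) * \sum_i c i ^+ 2.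
  by apply: mulr_ge0; [exact: ltW | apply: sumr_ge0 => i _; exact: sqr_ge0].
have zz_le0 : dot z z <= 0 by rewrite -(pmulr_rle0 _ eps_gt0); lra.
by apply/eqP; rewrite -dot_eq0 eq_le zz_le0 dot_ge0.
Qed.
End Objective.

Section Maximizer.
Variables (R : realType) (n : nat) (K : set 'rV[R]_n).
Local Notation vec := 'rV[R]_n.
Local Notation N := n.+1.
Hypothesis n_gt0 : (0 < n)%N.

Lemma objective_argmax_sharp (eps : R) (p : 'I_N -> vec) : 0 < eps ->
  (forall i, K (p i)) ->
  (forall q, (forall i, K (q i)) -> objective eps q <= objective eps p) ->
  forall i, sharp_normal K (objective_grad eps p i) (p i).
Proof.
move=> eps_gt0 pK p_max i; exists (eps * (n%:R / (2 * N%:R))).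
  by rewrite mulr_gt0 // divr_gt0 ?ltr0n // mulr_gt0 ?ltr0n.
move=> y Ky; have : objective eps [eta p with i |-> y] <= objective eps p.
  by apply: p_max => j /=; case: eqP.
by rewrite -subr_le0 objective_set -lerBrDr sub0r.
Qed.

Hypotheses (K_compact : compact K) (K_full : full_dim K).

(* The weight [eps] is small enough that the spread term cannot destroy half of
   the determinant of a nondegenerate simplex [q0]. *)
Lemma exists_objective_argmax : exists2 eps : R, 0 < eps &
  exists2 p : 'I_N -> vec, forall i, K (p i) &
    0 < \det (simplex_mx p) /\
    forall q, (forall i, K (q i)) -> objective eps q <= objective eps p.
Proof.
have K_ne : K !=set0 := full_dim_nonempty K_full.
have [q0 q0K det0_gt0] := full_dim_simplex_det_gt0 K_full n_gt0.
have [pM pMK pM_max] := config_argmax (@continuous_spread R n) K_compact K_ne.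
have [pm pmK pm_min] := config_argmin (@continuous_spread R n) K_compact K_ne.
set D0 := \det (simplex_mx q0) in det0_gt0 *; set M := spread pM; set m := spread pm.
have Mm_ge0 : 0 <= M - m by rewrite subr_ge0 (le_trans (pm_min _ q0K) (pM_max _ q0K)).
pose eps := D0 / (2 * (M - m + 1)).
have eps_gt0 : 0 < eps by rewrite divr_gt0 // mulr_gt0 // ltr_wpDl.
have eps_Mm : eps * (M - m + 1) = D0 / 2 by rewrite /eps; field; lra.
have [p pK p_max] := config_argmax (@continuous_objective R n eps) K_compact K_ne.
exists eps => //; exists p => //; split => //.
have spread_gap : eps * (spread p - spread q0) <= eps * (M - m).
  have := pM_max p pK; have := pm_min q0 q0K; rewrite -/M -/m => ? ?.
  by rewrite ler_pM2l //; lra.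
by have := p_max q0 q0K; rewrite /objective -/D0 => ?; lra.
Qed.
End Maximizer.

Unset Implicit Arguments.
Theorem theorem3p3 (R : realType) (n : nat) (K : set 'rV[R]_n) :
  (1 <= n)%N -> compact K -> convex.convex_set K -> full_dim K ->
  exists (u x : 'I_n.+1 -> 'rV[R]_n),
    injective x /\
    (forall i, exposed_point K (x i) /\ regular_normal_at K (u i) (x i)) /\
    simplex_facet_normals u.
Proof.
move=> n_gt0 K_compact _ K_full.
have [eps eps_gt0 [p pK [det_gt0 p_max]]] :=
  exists_objective_argmax n_gt0 K_compact K_full.
pose g := objective_grad eps p.
have g_sharp i : sharp_normal K (g i) (p i) :=
  objective_argmax_sharp n_gt0 eps_gt0 pK p_max i.
have g_neq0 i : g i != 0.
  have [y Ky yp] := full_dim_nonsingleton K_full (p i) n_gt0.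
  exact: sharp_normal_neq0 (g_sharp i) y Ky yp.
have g_regular i := sharp_normal_regular (g_sharp i) (pK i) (g_neq0 i).
exists (fun i => normalize (g i)), p; split; first exact/simplex_mx_inj/lt0r_neq0.
split; first by move=> i; split; first exists (normalize (g i)).
apply: simplex_of_balanced_normals => //; first exact: sum_objective_grad.
exact: objective_grad_span.
Qed.
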